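(* Let $G$ be a connected graph, let $u\in V(G)$ be any vertex, and let $G'$ be obtained from $G$ by adding a new vertex $x$ and the edge $ux$. If $G$ forces an all-ones representation then $\operatorname{cdim}(G')=\operatorname{cdim}(G)+1$; otherwise $\operatorname{cdim}(G')=\operatorname{cdim}(G)$. In particular, the value of $\operatorname{cdim}(G')$ does not depend on the choice of $u$.
   Context: All graphs are finite, simple, undirected and nonempty. For distinct vertices $v,w$ of a graph $G$, $\kappa_G(v,w)$ is the maximum number of internally vertex-disjoint $v$–$w$ paths in $G$ (an edge $vw$ counts as one such path); $\kappa_G(v,v)=\infty$. For an ordered vertex set $W=(w_1,\ldots,w_k)$, $r_G(v,W)=[\kappa_G(v,w_1),\ldots,\kappa_G(v,w_k)]$. $W$ is resolving for $G$ if $r_G(v_1,W)=r_G(v_2,W)$ implies $v_1=v_2$. A (connectivity) basis is a resolving set of minimum cardinality, and $\operatorname{cdim}(G)$ is its cardinality. A graph $G$ forces an all-ones representation if for every basis $B$ of $G$ there is a vertex $v\in V(G)$ with $r_G(v,B)=[1,\ldots,1]$ (all entries equal to $1$); the one-vertex graph $K_1$ (only basis $\emptyset$, empty representation vector) counts as forcing an all-ones representation. *)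

From mathcomp Require Import all_boot.
From mathcomp Require Import boolp.
Set Implicit Arguments. Unset Strict Implicit. Unset Printing Implicit Defensive.

Section Conn.
Variables (T : finType) (e : rel T).

Definition simple_graph := symmetric e /\ irreflexive e.
Definition connected_graph := forall x y : T, connect e x y.

Definition is_path (v w : T) (p : seq T) : bool :=
  [&& path e v p, uniq (v :: p) & last v p == w].

Definition interior (v : T) (p : seq T) : seq T := behead (belast v p).

Definition disjoint_paths (v w : T) (ps : seq (seq T)) : Prop :=
  [/\ uniq ps, all (is_path v w) ps &
      pairwise (fun p q => [disjoint interior v p & interior v q]) ps].

Definition has_k_paths (v w : T) (k : nat) : Prop :=
  exists ps, size ps = k /\ disjoint_paths v w ps.

(* Local connectivity; None stands for infinity (kappa v v = oo).
   Any family of such paths has fewer than #|T|.+2 members (at most one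
   path with empty interior, the others have nonempty disjoint interiors),
   so the bounded max is the true maximum. *)
Definition kappa (v w : T) : option nat :=
  if v == w then None
  else Some (\max_(k < #|T|.+2 | `[< has_k_paths v w k >]) (k : nat)).

Definition rep (v : T) (W : {set T}) : seq (option nat) :=
  [seq kappa v w | w <- enum W].

Definition resolving (W : {set T}) : Prop :=
  forall v1 v2 : T, rep v1 W = rep v2 W -> v1 = v2.

Definition basis (B : {set T}) : Prop :=
  resolving B /\ forall W : {set T}, resolving W -> #|B| <= #|W|.

(* connectivity dimension: minimum size of a resolving set
   (setT is always resolving, so the arg min is well defined) *)
Definition cdim : nat :=
  #| [arg min_(W < [set: T] | `[< resolving W >]) #|W| ] |.

Definition forces_all_ones : Prop :=
  forall B : {set T}, basis B -> exists v : T, rep v B = nseq #|B| (Some 1).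

End Conn.

(* G' : add a new vertex x (= None) adjacent only to u *)
Definition add_pendant (T : finType) (e : rel T) (u : T) : rel (option T) :=
  fun a b => match a, b with
             | Some x, Some y => e x y
             | Some x, None => x == u
             | None, Some y => y == u
             | None, None => false
             end.

From mathcomp Require Import all_boot.
From mathcomp Require Import boolp.
Set Implicit Arguments. Unset Strict Implicit. Unset Printing Implicit Defensive.

(* The new vertex x is a leaf, so it never lies inside a path between two old
   vertices: connectivities among old vertices are unchanged in G', and every
   old vertex has connectivity 1 to x.  Hence a resolving set of G' restricts
   to one of G, and adding x to a resolving set of G resolves G', so
   cdim G <= cdim G' <= cdim G + 1.  Since x has the all-ones representation
   with respect to any set of old vertices, a basis of G without an all-ones
   vertex already resolves G'.  Conversely, if G forces an all-ones
   representation, a resolving set of G' of size cdim G would consist of old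
   vertices and be a basis of G, whose all-ones vertex x cannot be told
   apart from. *)

Lemma pairwise_neq_and (A : eqType) (r : rel A) s :
  uniq s -> pairwise r s -> pairwise (fun x y => (x != y) && r x y) s.
Proof.
rewrite uniq_pairwise; elim: s => //= x s IH /andP[nx us] /andP[rx rs].
rewrite IH // andbT; apply/allP => y ys /=.
by apply/andP; split; [exact: (allP nx) | exact: (allP rx)].
Qed.

Section LocalConnectivity.
Variables (T : finType) (e : rel T).
Implicit Types (v w x : T) (p q : seq T) (k : nat).

Lemma interior_rcons v p x : interior v (rcons p x) = p.
Proof. by rewrite /interior belast_rcons. Qed.

Lemma interior_rev v w p : interior w (rev (belast v p)) = rev (interior v p).
Proof.
case/lastP: p => [|p x] //.
by rewrite belast_rcons rev_cons !interior_rcons.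
Qed.

Lemma head_mem_interior v p : 1 < size p -> head v p \in interior v p.
Proof. by case: p => [|x [|y p]] //= _; rewrite inE eqxx. Qed.

Lemma endpoints_notin_interior v w p :
  is_path e v w p -> (v \notin interior v p) && (w \notin interior v p).
Proof.
case/and3P=> _ + /eqP <-; case: p => [//|x p] /andP[vp up].
rewrite /interior /=; apply/andP; split.
  by apply: contra vp => /mem_belast.
by move: (up : uniq (x :: p)); rewrite (lastI x p) rcons_uniq => /andP[].
Qed.

Lemma short_path_unique v w p q : is_path e v w p -> is_path e v w q ->
  size p <= 1 -> size q <= 1 -> p = q.
Proof.
case: p => [|x [|//]]; case: q => [|y [|//]] //= /and3P[_ up /eqP lp];
  case/and3P=> _ uq /eqP lq _ _; rewrite /= in lp lq; subst.
all: by move: up uq; rewrite /= ?inE ?eqxx.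
Qed.

Lemma head_short_path v w p :
  is_path e v w p -> size p <= 1 -> head v p \in [:: v; w].
Proof.
by case: p => [|x [|]] //= /and3P[_ _ /eqP <-] _; rewrite !inE eqxx ?orbT.
Qed.

Lemma head_path_neq v w p q :
  is_path e v w p -> is_path e v w q -> p != q ->
  [disjoint interior v p & interior v q] -> head v p != head v q.
Proof.
wlog le_pq : p q / size p <= size q => [hwlog|] hp hq pq dpq.
  have [le_pq|le_qp] := leqP (size p) (size q); first exact: hwlog.
  rewrite eq_sym; apply: hwlog => //; first exact: ltnW.
    by rewrite eq_sym.
  by rewrite disjoint_sym.
have [short_q|long_q] := leqP (size q) 1.
  by rewrite (short_path_unique hp hq (leq_trans le_pq short_q) short_q) eqxx in pq.
have hq_int := head_mem_interior v long_q.
apply: contraTneq hq_int => <-.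
have [short_p|long_p] := leqP (size p) 1.
  have := head_short_path hp short_p; rewrite !inE.
  by case/pred2P=> ->; have /andP[] := endpoints_notin_interior hq.
by rewrite (disjointFr dpq (head_mem_interior v long_p)).
Qed.

(* The paths of a family leave v through pairwise distinct vertices. *)
Lemma has_k_paths_le_card v w k : has_k_paths e v w k -> k <= #|T|.
Proof.
move=> [ps [<- [ups paths_ps disj_ps]]].
rewrite -(size_map (head v)) -(card_uniqP _); first exact: max_card.
rewrite uniq_pairwise pairwise_map.
apply: (sub_in_pairwise _ paths_ps (pairwise_neq_and ups disj_ps)).
by move=> p q hp hq /andP[pq dpq]; exact: (head_path_neq hp hq pq dpq).
Qed.

Lemma has_0_paths v w : has_k_paths e v w 0.
Proof. by exists [::]. Qed.

Lemma has_1_path v w p : is_path e v w p -> has_k_paths e v w 1.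
Proof. by move=> hp; exists [:: p]; split=> //; split; rewrite //= hp. Qed.

Lemma connect_is_path v w : connect e v w -> exists p, is_path e v w p.
Proof.
case/connectP=> p pp ->; case/shortenP: pp => q qp uq _.
by exists q; rewrite /is_path qp uq eqxx.
Qed.

Lemma has_k_paths_le1 v w k :
  (forall p q, is_path e v w p -> is_path e v w q ->
     p = q \/ ~~ [disjoint interior v p & interior v q]) ->
  has_k_paths e v w k -> k <= 1.
Proof.
move=> meet [ps [<- [ups paths_ps disj_ps]]].
case: ps ups paths_ps disj_ps => [|p [|q ps]] //= /andP[pq _].
case/and3P=> hp hq _ /andP[/andP[dpq _] _].
by case: (meet p q hp hq) => [eq_pq|]; [rewrite eq_pq inE eqxx in pq | rewrite dpq].
Qed.

Lemma kappa_refl v : kappa e v v = None.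
Proof. by rewrite /kappa eqxx. Qed.

Lemma kappa_eq_None v w : (kappa e v w == None) = (v == w).
Proof. by rewrite /kappa; case: (v == w). Qed.

Lemma kappa_max v w : v != w ->
  exists m, [/\ kappa e v w = Some m, has_k_paths e v w m &
                forall k, has_k_paths e v w k -> k <= m].
Proof.
rewrite /kappa => /negbTE ->.
set A : pred 'I_#|T|.+2 := fun k : 'I_#|T|.+2 => `[< has_k_paths e v w k >].
have ub k : has_k_paths e v w k -> k <= \max_(i | A i) (i : nat).
  move=> hk; have k_lt : k < #|T|.+2.
    by rewrite ltnS; apply/leqW/(has_k_paths_le_card hk).
  exact: (@leq_bigmax_cond _ A (fun i => i : nat) (Ordinal k_lt) (asboolT hk)).
have A_gt0 : 0 < #|A| by apply/card_gt0P; exists ord0; exact/asboolT/has_0_paths.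
have [m /asboolP hm max_m] := eq_bigmax_cond (fun i : 'I_#|T|.+2 => i : nat) A_gt0.
by exists m; split=> //; rewrite -max_m.
Qed.

Lemma kappa_eq_Some v w m : v != w -> has_k_paths e v w m ->
  (forall k, has_k_paths e v w k -> k <= m) -> kappa e v w = Some m.
Proof.
move=> vw hm ub; have [m' [-> hm' ub']] := kappa_max vw.
by congr Some; apply/eqP; rewrite eqn_leq ub ?ub'.
Qed.

Lemma rev_belastK v w p :
  last v p = w -> rev (belast w (rev (belast v p))) = p.
Proof.
case/lastP: p => [|p x] //; rewrite last_rcons => ->.
by rewrite belast_rcons rev_cons belast_rcons rev_cons revK.
Qed.

Hypothesis e_sym : symmetric e.

Lemma is_path_rev v w p : is_path e v w p -> is_path e w v (rev (belast v p)).
Proof.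
case/and3P=> pp up /eqP lp.
have rev_vp : w :: rev (belast v p) = rev (v :: p) by rewrite (lastI v p) rev_rcons lp.
apply/and3P; split.
- by rewrite -lp rev_path (eq_path (fun x y => e_sym y x)).
- by rewrite rev_vp rev_uniq.
- by rewrite -(last_cons v) rev_vp rev_cons last_rcons.
Qed.

Lemma has_k_paths_rev v w k : has_k_paths e v w k -> has_k_paths e w v k.
Proof.
move=> [ps [<- [ups paths_ps disj_ps]]].
exists (map (fun p => rev (belast v p)) ps); split; first by rewrite size_map.
split.
- rewrite (map_inj_in_uniq _) // => p q /(allP paths_ps)/and3P[_ _ /eqP lp].
  move=> /(allP paths_ps)/and3P[_ _ /eqP lq] pq.
  by rewrite -(rev_belastK lp) pq rev_belastK.
- by rewrite all_map; apply: sub_all paths_ps => p /is_path_rev.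
- rewrite pairwise_map; apply: sub_pairwise disj_ps => p q /=.
  by rewrite !interior_rev (eq_disjoint (mem_rev _)) (eq_disjoint_r (mem_rev _)).
Qed.

Lemma kappaC v w : kappa e v w = kappa e w v.
Proof.
rewrite /kappa eq_sym; case: eqP => // _; congr Some.
by apply: eq_bigl => k; apply/asboolP/asboolP => /has_k_paths_rev.
Qed.

End LocalConnectivity.

Section Leaf.
Variables (T : finType) (e : rel T) (x c : T).
Hypothesis into_leaf : forall y, e y x -> y = c.

Lemma path_to_leaf v p : v != x -> is_path e v x p ->
  if v == c then p = [:: x] else c \in interior v p.
Proof.
move=> vx /and3P[]; case/lastP: p => [|q y].
  by move=> _ _ /eqP /= vx'; rewrite vx' eqxx in vx.
rewrite last_rcons => + + /eqP yx; rewrite {y}yx rcons_path interior_rcons.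
move=> /andP[_ /into_leaf lq]; case: eqP => [vc|/eqP cv].
  case: q lq => [//|z q] /= lzq /andP[+ _].
  by rewrite vc -lzq -rcons_cons mem_rcons inE mem_last orbT.
by have := mem_last v q; rewrite lq inE eq_sym (negbTE cv).
Qed.

Lemma kappa_to_leaf v : v != x -> connect e v x -> kappa e v x = Some 1.
Proof.
move=> vx /connect_is_path [p hp]; apply: kappa_eq_Some (has_1_path hp) _ => //.
move=> k; apply: has_k_paths_le1 => q r hq hr.
have := path_to_leaf vx hq; have := path_to_leaf vx hr.
case: eqP => _ => [-> ->|cr cq]; first by left.
by right; apply/negP => /disjointFr/(_ cq); rewrite cr.
Qed.

Hypothesis out_of_leaf : forall y, e x y -> y = c.

(* An internal occurrence of x would be flanked by c on both sides. *)
Lemma leaf_notin_path v w p : v != x -> w != x -> is_path e v w p -> x \notin p.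
Proof.
move=> vx wx /and3P[pp up /eqP lp]; apply/negP => xp.
move: pp up lp; case/splitPr: xp => p1 p2.
rewrite cat_path last_cat /= => /and3P[_ /into_leaf lp1].
case: p2 => [_ _ /= xw|y p2 /andP[/out_of_leaf -> _] up _].
  by rewrite xw eqxx in wx.
move: (up : uniq ((v :: p1) ++ [:: x, c & p2])); rewrite cat_uniq.
have c_in : c \in [:: x, c & p2] by rewrite !inE eqxx orbT.
by case/and3P=> _ /hasPn/(_ c c_in); rewrite -lp1 mem_last.
Qed.

End Leaf.

Section ResolvingSets.
Variables (T : finType) (e : rel T).
Implicit Types (v w : T) (W B : {set T}).

Lemma rep_eqP v1 v2 W :
  rep e v1 W = rep e v2 W <-> {in W, forall w, kappa e v1 w = kappa e v2 w}.
Proof.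
rewrite /rep; split=> [/eq_in_map eq_kappa w wW | eq_kappa].
  by apply: eq_kappa; rewrite mem_enum.
by apply/eq_in_map => w; rewrite mem_enum; apply: eq_kappa.
Qed.

Lemma rep_all_ones v W :
  rep e v W = nseq #|W| (Some 1) <-> {in W, forall w, kappa e v w = Some 1}.
Proof.
rewrite cardE -(size_map (kappa e v)); split=> [/all_pred1P|all_ones].
  by rewrite all_map => /allP all_ones w; rewrite -mem_enum => /all_ones/eqP.
apply/all_pred1P; rewrite all_map; apply/allP => w.
by rewrite mem_enum => /all_ones /= ->.
Qed.

Lemma resolvingP W : resolving e W <->
  (forall v1 v2, {in W, forall w, kappa e v1 w = kappa e v2 w} -> v1 = v2).
Proof. by split=> res v1 v2 /rep_eqP/res. Qed.

Lemma resolving_setT : resolving e [set: T].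
Proof.
apply/resolvingP => v1 v2 /(_ v1 (in_setT _)).
by rewrite kappa_refl => /esym/eqP; rewrite kappa_eq_None => /eqP.
Qed.

Lemma cdim_le W : resolving e W -> cdim e <= #|W|.
Proof.
move=> resW; rewrite /cdim; case: arg_minnP => [|W0 _ min_W0].
  exact/asboolT/resolving_setT.
exact/min_W0/asboolT.
Qed.

Lemma cdim_attained : exists2 W, resolving e W & #|W| = cdim e.
Proof.
rewrite /cdim; case: arg_minnP => [|W /asboolP resW _]; last by exists W.
exact/asboolT/resolving_setT.
Qed.

Lemma basis_card B : basis e B -> #|B| = cdim e.
Proof.
case=> resB min_B; have [W resW cardW] := cdim_attained.
by apply/eqP; rewrite eqn_leq cdim_le // andbT -cardW min_B.
Qed.
End ResolvingSets.

Lemma map_Some_pmap (T : eqType) (p : seq (option T)) :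
  None \notin p -> map Some (pmap id p) = p.
Proof. by elim: p => [|[x|] p IHp] //=; rewrite inE negb_or => /andP[_ /IHp ->]. Qed.

Section Pendant.
Variables (T : finType) (e : rel T) (u : T).
Local Notation G := (add_pendant e u).
Implicit Types (v w : T) (p : seq T) (k : nat).

Lemma add_pendant_sym : symmetric e -> symmetric G.
Proof. by move=> e_sym [x|] [y|] //=; rewrite e_sym. Qed.

Lemma add_pendant_into_new y : G y None -> y = Some u.
Proof. by case: y => // y /eqP ->. Qed.

Lemma add_pendant_out_of_new y : G None y -> y = Some u.
Proof. by case: y => // y /eqP ->. Qed.

Lemma interior_map_Some v p : interior (Some v) (map Some p) = map Some (interior v p).
Proof. by rewrite /interior belast_map behead_map. Qed.

Lemma path_pendant_Some v p : path G (Some v) (map Some p) = path e v p.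
Proof. by rewrite path_map; apply: eq_path. Qed.

Lemma is_path_pendant_Some v w p :
  is_path G (Some v) (Some w) (map Some p) = is_path e v w p.
Proof.
rewrite /is_path path_pendant_Some -map_cons (map_inj_uniq (@Some_inj _)).
by rewrite last_map (inj_eq (@Some_inj _)).
Qed.

Lemma disjoint_paths_pendant_Some v w ps :
  disjoint_paths G (Some v) (Some w) (map (map Some) ps) <-> disjoint_paths e v w ps.
Proof.
rewrite /disjoint_paths (map_inj_uniq (inj_map (@Some_inj _))) all_map pairwise_map.
rewrite (eq_all (a2 := is_path e v w)); last first.
  by move=> p /=; rewrite is_path_pendant_Some.
suff eq_disj : relpre (map Some) (fun p q : seq (option T) =>
      [disjoint interior (Some v) p & interior (Some v) q]) =2
    (fun p q => [disjoint interior v p & interior v q]).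
  by rewrite (eq_in_pairwise (in2W eq_disj) (all_predT ps)).
move=> p q /=; rewrite !interior_map_Some !disjoint_has has_map.
by congr (~~ _); apply: eq_has => x /=; rewrite (mem_map (@Some_inj _)).
Qed.

Lemma has_k_paths_pendant_Some v w k :
  has_k_paths G (Some v) (Some w) k <-> has_k_paths e v w k.
Proof.
split=> [[ps [<- disj_ps]]|[ps [<- /disjoint_paths_pendant_Some disj_ps]]].
  have no_new (p : seq (option T)) : p \in ps -> None \notin p.
    case: disj_ps => _ /allP paths_ps _ /paths_ps.
    exact: (leaf_notin_path add_pendant_into_new add_pendant_out_of_new).
  exists (map (pmap id) ps); split; first by rewrite size_map.
  apply/disjoint_paths_pendant_Some; rewrite -map_comp map_id_in //.
  by move=> p /no_new /map_Some_pmap.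
by exists (map (map Some) ps); rewrite size_map.
Qed.

Lemma kappa_pendant_Some v w : kappa G (Some v) (Some w) = kappa e v w.
Proof.
have [->|vw] := eqVneq v w; first by rewrite !kappa_refl.
have [m [-> has_m max_m]] := kappa_max e vw.
apply: kappa_eq_Some; first by rewrite (inj_eq (@Some_inj _)).
  exact/has_k_paths_pendant_Some.
by move=> k /has_k_paths_pendant_Some/max_m.
Qed.

Lemma connect_pendant_Some v w : connect e v w -> connect G (Some v) (Some w).
Proof.
case/connectP=> p pp ->; apply/connectP; exists (map Some p).
  by rewrite path_pendant_Some.
by rewrite last_map.
Qed.

Hypothesis e_conn : connected_graph e.

Lemma kappa_pendant_to_new v : kappa G (Some v) None = Some 1.
Proof.
apply: (kappa_to_leaf add_pendant_into_new) => //.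
by apply: connect_trans (connect_pendant_Some (e_conn v u)) (connect1 _) => /=.
Qed.

Lemma card_option_set (W : {set option T}) :
  #|W| = (None \in W) + #|[set v | Some v \in W]|.
Proof.
rewrite (cardsD1 None) -[in RHS](card_imset _ (@Some_inj _)).
suff -> : W :\ None = Some @: [set v | Some v \in W] by [].
apply/setP => -[v|]; rewrite !inE ?(mem_imset _ _ (@Some_inj _)) ?inE //.
by apply/esym/imsetP => -[].
Qed.

Lemma resolving_pendant_restrict (W : {set option T}) :
  resolving G W -> resolving e [set v | Some v \in W].
Proof.
move/resolvingP=> resW; apply/resolvingP => v1 v2 eq_kappa.
suff [] : Some v1 = Some v2 by [].
apply: resW => -[w|] wW; last by rewrite !kappa_pendant_to_new.
by rewrite !kappa_pendant_Some; apply: eq_kappa; rewrite inE.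
Qed.

Lemma resolving_pendant_add (B : {set T}) :
  resolving e B -> resolving G (None |: Some @: B).
Proof.
move/resolvingP=> resB; apply/resolvingP => -[v1|] [v2|] eq_kappa //.
- congr Some; apply: resB => w wB; rewrite -!kappa_pendant_Some.
  by apply: eq_kappa; rewrite !inE (mem_imset _ _ (@Some_inj _)) wB orbT.
- by move: (eq_kappa None (setU11 _ _)); rewrite kappa_pendant_to_new kappa_refl.
- by move: (eq_kappa None (setU11 _ _)); rewrite kappa_pendant_to_new kappa_refl.
Qed.

Lemma cdim_le_pendant : cdim e <= cdim G.
Proof.
have [W resW <-] := cdim_attained G.
apply: leq_trans (cdim_le (resolving_pendant_restrict resW)) _.
by rewrite (card_option_set W) leq_addl.
Qed.

Lemma cdim_pendant_le : cdim G <= (cdim e).+1.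
Proof.
have [B resB <-] := cdim_attained e.
apply: leq_trans (cdim_le (resolving_pendant_add resB)) _.
by rewrite cardsU1 (card_imset _ (@Some_inj _)); case: (_ \notin _).
Qed.

Hypothesis e_sym : symmetric e.

Lemma kappa_pendant_from_new w : kappa G None (Some w) = Some 1.
Proof. by rewrite kappaC ?kappa_pendant_to_new //; apply: add_pendant_sym. Qed.

Lemma resolving_pendant_lift (B : {set T}) :
  resolving e B -> (forall v, ~ {in B, forall w, kappa e v w = Some 1}) ->
  resolving G (Some @: B).
Proof.
move/resolvingP=> resB no_ones; apply/resolvingP.
have in_B w : (Some w \in Some @: B) = (w \in B).
  by rewrite (mem_imset _ _ (@Some_inj _)).
move=> [v1|] [v2|] eq_kappa //.
- congr Some; apply: resB => w wB; rewrite -!kappa_pendant_Some.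
  by apply: eq_kappa; rewrite in_B.
- case: (no_ones v1) => w wB.
  by rewrite -kappa_pendant_Some eq_kappa ?in_B // kappa_pendant_from_new.
- case: (no_ones v2) => w wB.
  by rewrite -kappa_pendant_Some -eq_kappa ?in_B // kappa_pendant_from_new.
Qed.

Lemma cdim_pendant_forces : forces_all_ones e -> cdim G = (cdim e).+1.
Proof.
move=> forces; apply/eqP; rewrite eqn_leq cdim_pendant_le ltnNge /=.
apply/negP => small; have [W resW cardW] := cdim_attained G.
have resW_T := resolving_pendant_restrict resW.
move: cardW; rewrite (card_option_set W).
case: (boolP (None \in W)) => [_|newW]; rewrite ?add1n ?add0n => cardW.
  by have := leq_trans small (cdim_le resW_T); rewrite -cardW ltnn.
have basisW_T : basis e [set v | Some v \in W].
  by split=> // W' resW'; rewrite cardW (leq_trans small) ?cdim_le.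
have [v /rep_all_ones ones] := forces _ basisW_T.
suff : Some v = None by [].
move/resolvingP: resW; apply=> -[w|] wW; last by rewrite wW in newW.
by rewrite kappa_pendant_Some kappa_pendant_from_new ones // inE.
Qed.

Lemma cdim_pendant_not_forces : ~ forces_all_ones e -> cdim G = cdim e.
Proof.
move=> not_forces; apply/eqP; rewrite eqn_leq cdim_le_pendant andbT.
have [B [basisB no_ones]] : exists B, basis e B /\
    forall v, ~ {in B, forall w, kappa e v w = Some 1}.
  apply: contra_notP not_forces => no_basis B basisB.
  apply: contra_notP no_basis => no_vertex; exists B; split=> // v /rep_all_ones.
  by move=> ones; apply: no_vertex; exists v.
rewrite -(basis_card basisB) -(card_imset _ (@Some_inj _)).
exact/cdim_le/resolving_pendant_lift/no_ones/basisB.1.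
Qed.

End Pendant.

Theorem mainTheorem12 (T : finType) (e : rel T) :
  simple_graph e -> 0 < #|T| -> connected_graph e ->
  (forall u : T,
     (forces_all_ones e -> cdim (add_pendant e u) = (cdim e).+1) /\
     (~ forces_all_ones e -> cdim (add_pendant e u) = cdim e)) /\
  (forall u1 u2 : T, cdim (add_pendant e u1) = cdim (add_pendant e u2)).
Proof.
move=> [e_sym _] _ e_conn.
split=> [u|u1 u2].
  by split; [apply: cdim_pendant_forces | apply: cdim_pendant_not_forces].
have [forces|not_forces] := pselect (forces_all_ones e).
  by rewrite !cdim_pendant_forces.
by rewrite !cdim_pendant_not_forces.
Qed.
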